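(* Let $\langle A,C,d,O,v,(\prec_a)_{a\in A}\rangle$ be an infinite sequential game, let $\Gamma\subseteq\mathcal{P}(C^\omega)$, and assume: (1) every $\prec_a$ is a strict weak order; (2) the win-lose game $\langle C,D,W\rangle$ is determined for all $W\in\Gamma$ and $D\subseteq C^*$; (3) for every $a\in A$, every $\prec_a$-terminal interval $I$ and every $\gamma\in C^*$, $v^{-1}[I]\cap\gamma C^\omega\in\Gamma$; (4) for every $a\in A$, play $p\in C^\omega$ and increasing $\varphi:\mathbb{N}\to\mathbb{N}$, if $d(p_{<\varphi(n)})=a$ and $G_a(p_{<\varphi(n+1)})\subsetneq G_a(p_{<\varphi(n)})$ for all $n\in\mathbb{N}$, then $v(p)\in\bigcap_{n\in\mathbb{N}}G_a(p_{<\varphi(n)})$; (5) for every $a\in A$ and every $\gamma\in C^*$ there exists a strategy $s$ of $a$ with $g_a(\gamma,s)=G_a(\gamma)$. Then the game has a Nash equilibrium.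
   Context: The game consists of non-empty sets $A$ (agents), $C$ (choices), $O$ (outcomes), $d:C^*\to A$ (chooser after each history), $v:C^\omega\to O$, and preferences $\prec_a$ on $O$. A strategy of $a$ is a function $s:d^{-1}(\{a\})\to C$; a profile is identified with $\sigma:C^*\to C$, inducing the play $p(\sigma)$ with $p_n=\sigma(p_{<n})$ ($p_{<n}$ the length-$n$ prefix). $\sigma$ is a Nash equilibrium if there is no agent $a$ and strategy $s$ of $a$ with $v(p(\sigma))\prec_a v(p(\sigma_{a\mapsto s}))$, where $\sigma_{a\mapsto s}$ agrees with $s$ on $d^{-1}(\{a\})$ and with $\sigma$ elsewhere. For partial $t:\subseteq C^*\to C$, $P(t)$ is the set of plays of total profiles extending $t$. For a strategy $s$ of $a$ and $\gamma\in C^*$, $s|_\gamma$ is its restriction to histories extending $\gamma$; $g_a(\gamma,s):=\{o\in O\mid\exists p\in P(s|_\gamma)\cap\gamma C^\omega,\ \neg(o\prec_a v(p))\}$ and $G_a(\gamma):=\bigcap_s g_a(\gamma,s)$ over all strategies $s$ of $a$. A strict weak order is an irreflexive, transitive relation with $\neg(x\prec y)\wedge\neg(y\prec z)\Rightarrow\neg(x\prec z)$. A $\prec_a$-terminal interval is a set $I\subseteq O$ such that $o\in I$ and $\neg(o'\prec_a o)$ imply $o'\in I$. The win-lose game $\langle C,D,W\rangle$ is the two-player game where the first player chooses after histories in $D$, the second after histories in $C^*\setminus D$, and the first player wins iff the play lies in $W$; it is determined if one player has a winning strategy. *)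

From Stdlib Require Import List Arith ClassicalEpsilon.
Import ListNotations.
Unset Implicit Arguments.

Section Games.
Variables (A C O : Type).

Definition combine (P : list C -> Prop) (s1 : forall h, P h -> C)
  (s2 : forall h, ~ P h -> C) : list C -> C :=
  fun h => match excluded_middle_informative (P h) with
           | left e => s1 h e
           | right ne => s2 h ne
           end.

Definition pre (p : nat -> C) (n : nat) : list C := map p (seq 0 n).

Fixpoint hist (sigma : list C -> C) (n : nat) : list C :=
  match n with
  | 0 => []
  | S k => hist sigma k ++ [sigma (hist sigma k)]
  end.

Definition play (sigma : list C -> C) : nat -> C := fun n => sigma (hist sigma n).

Definition in_cone (gamma : list C) (p : nat -> C) : Prop :=
  pre p (length gamma) = gamma.

Definition extends (gamma h : list C) : Prop := exists t, h = gamma ++ t.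

(* win-lose game <C,D,W>: first player plays at histories in D *)
Definition determined (D : list C -> Prop) (W : (nat -> C) -> Prop) : Prop :=
  (exists s1 : forall h, D h -> C, forall s2 : forall h, ~ D h -> C,
      W (play (combine D s1 s2))) \/
  (exists s2 : forall h, ~ D h -> C, forall s1 : forall h, D h -> C,
      ~ W (play (combine D s1 s2))).

Variables (d : list C -> A) (v : (nat -> C) -> O) (pref : A -> O -> O -> Prop).

Definition strategy (a : A) : Type := forall h : list C, d h = a -> C.

Definition deviate (sigma : list C -> C) (a : A) (s : strategy a) : list C -> C :=
  combine (fun h => d h = a) s (fun h _ => sigma h).

Definition nash (sigma : list C -> C) : Prop :=
  ~ exists (a : A) (s : strategy a),
      pref a (v (play sigma)) (v (play (deviate sigma a s))).

(* P(t) for the partial profile t = s|_gamma *)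
Definition P_restr (a : A) (s : strategy a) (gamma : list C) (p : nat -> C) : Prop :=
  exists sigma : list C -> C,
    (forall h (e : d h = a), extends gamma h -> sigma h = s h e) /\ p = play sigma.

Definition g_ (a : A) (gamma : list C) (s : strategy a) (o : O) : Prop :=
  exists p, P_restr a s gamma p /\ in_cone gamma p /\ ~ pref a o (v p).

Definition G_ (a : A) (gamma : list C) (o : O) : Prop :=
  forall s : strategy a, g_ a gamma s o.

Definition strict_weak_order (R : O -> O -> Prop) : Prop :=
  (forall x, ~ R x x) /\
  (forall x y z, R x y -> R y z -> R x z) /\
  (forall x y z, ~ R x y -> ~ R y z -> ~ R x z).

Definition terminal_interval (a : A) (I : O -> Prop) : Prop :=
  forall o o', I o -> ~ pref a o' o -> I o'.

End Games.

Arguments combine {C}.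
Arguments pre {C}.
Arguments hist {C}.
Arguments play {C}.
Arguments in_cone {C}.
Arguments extends {C}.
Arguments determined {C}.
Arguments strategy {A C}.
Arguments deviate {A C}.
Arguments nash {A C O}.
Arguments P_restr {A C}.
Arguments g_ {A C O}.
Arguments G_ {A C O}.
Arguments strict_weak_order {O}.
Arguments terminal_interval {A O}.

(* Let every agent, at each of its histories h, play the strategy realising
   G_a at the earliest own prefix of h from which G_a has stayed the same (its
   "anchor"). Along the resulting play p the sets G_a(p_<n) at the positions of a
   can only shrink: between consecutive own positions p follows a single optimal
   strategy. If they eventually stabilise, p is itself a play of one optimal
   strategy from the anchor, so v(p) lies in G_a(p_<n); if they shrink
   infinitely often, hypothesis (4) gives the same. Hence a deviation of a from p
   at p_<n leads to a history where v(p) is still guaranteed against a; by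
   determinacy of the game "a gets something better than v(p)" on that cone, the
   others have a strategy punishing the deviation, and p together with these
   punishments is a Nash equilibrium. *)

From Pilot Require Import Defs.
From Stdlib Require Import List Arith Lia Wf_nat Classical ClassicalEpsilon
  FunctionalExtensionality ProofIrrelevance.
Import ListNotations.

Definition least (P : nat -> Prop) : nat :=
  epsilon (inhabits 0) (fun n => P n /\ forall m, P m -> n <= m).

Lemma least_spec (P : nat -> Prop) :
  (exists n, P n) -> P (least P) /\ forall m, P m -> least P <= m.
Proof.
  intros HP. apply (epsilon_spec (inhabits 0) (fun n => P n /\ forall m, P m -> n <= m)).
  destruct (dec_inh_nat_subset_has_unique_least_element P (fun n => classic (P n)) HP)
    as [n [Hn _]].
  now exists n.
Qed.

Lemma last_below (P : nat -> Prop) i j : i < j -> P i ->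
  exists n, i <= n < j /\ P n /\ forall m, n < m < j -> ~ P m.
Proof.
  induction j as [|j IH]; intros Hij Hi; [lia|].
  destruct (classic (P j)) as [Hj|Hj].
  - exists j. split; [lia|]. split; [exact Hj|]. intros m Hm; lia.
  - assert (Hij' : i < j) by (destruct (Nat.eq_dec i j); [subst; contradiction|lia]).
    destruct (IH Hij' Hi) as [n [Hn [Pn Hlast]]].
    exists n. split; [lia|]. split; [exact Pn|].
    intros m Hm. destruct (Nat.eq_dec m j) as [->|Hmj]; [exact Hj|]. apply Hlast; lia.
Qed.

Lemma chain_choice {X : Type} (P : X -> Prop) (R : X -> X -> Prop) (x0 : X) :
  P x0 -> (forall x, P x -> exists y, P y /\ R x y) ->
  exists f : nat -> X, f 0 = x0 /\ forall k, P (f k) /\ R (f k) (f (S k)).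
Proof.
  intros H0 Hstep.
  pose (next x := epsilon (inhabits x0) (fun y => P y /\ R x y)).
  assert (Hnext : forall x, P x -> P (next x) /\ R x (next x))
    by (intros x Hx; exact (epsilon_spec _ _ (Hstep x Hx))).
  assert (Hf : forall k, P (Nat.iter k next x0))
    by (induction k as [|k IH]; [exact H0|apply (Hnext _ IH)]).
  exists (fun k => Nat.iter k next x0). split; [reflexivity|].
  intros k. split; [apply Hf|apply (Hnext _ (Hf k))].
Qed.

Section Plays.
Context {C : Type}.
Implicit Types (q r : nat -> C) (gamma h : list C) (sigma : list C -> C).

Lemma pre_S q n : pre q (S n) = pre q n ++ [q n].
Proof. unfold pre. now rewrite seq_S, map_app. Qed.

Lemma length_pre q n : length (pre q n) = n.
Proof. unfold pre. now rewrite length_map, length_seq. Qed.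

Lemma nth_error_pre q n i : i < n -> nth_error (pre q n) i = Some (q i).
Proof.
  intros Hi. unfold pre. rewrite nth_error_map, nth_error_seq.
  now replace (i <? n) with true by (symmetry; apply Nat.ltb_lt; exact Hi).
Qed.

Lemma firstn_pre q k n : k <= n -> firstn k (pre q n) = pre q k.
Proof.
  induction 1 as [|n Hkn IH].
  - rewrite <- (length_pre q k) at 1. apply firstn_all.
  - rewrite pre_S, firstn_app, IH, length_pre.
    replace (k - n) with 0 by lia. apply app_nil_r.
Qed.

Lemma pre_eq_lt q r n m : pre q n = pre r n -> m < n -> q m = r m.
Proof.
  intros E Hm. pose proof (nth_error_pre q n m Hm) as Hq.
  rewrite E, nth_error_pre in Hq by exact Hm. congruence.
Qed.

Lemma pre_inj q r : (forall n, pre q n = pre r n) -> q = r.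
Proof. intros E. extensionality n. exact (pre_eq_lt q r (S n) n (E _) (Nat.lt_succ_diag_r n)). Qed.

Lemma pre_ext_lt q r n : (forall m, m < n -> q m = r m) -> pre q n = pre r n.
Proof. intros H. apply map_ext_in. intros m Hm. apply in_seq in Hm. apply H. lia. Qed.

Lemma play_S sigma n : play sigma n = sigma (pre (play sigma) n).
Proof.
  assert (Hhist : forall k, hist sigma k = pre (play sigma) k).
  { induction k as [|k IH]; [reflexivity|]. simpl. rewrite pre_S, IH. unfold play. now rewrite IH. }
  unfold play at 1. now rewrite Hhist.
Qed.

Lemma play_eq_of_agree sigma q : (forall m, sigma (pre q m) = q m) -> play sigma = q.
Proof.
  intros H. apply pre_inj. induction n as [|n IH]; [reflexivity|].
  now rewrite !pre_S, play_S, IH, H.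
Qed.

Lemma extends_length gamma h : extends gamma h -> length gamma <= length h.
Proof. intros [t ->]. rewrite length_app. lia. Qed.

Lemma extends_pre q k n : k <= n -> extends (pre q k) (pre q n).
Proof.
  intros H. exists (skipn k (pre q n)). rewrite <- (firstn_pre q k n H) at 1.
  symmetry. apply firstn_skipn.
Qed.

Lemma in_cone_pre q r n : in_cone (pre q n) r <-> pre r n = pre q n.
Proof. unfold in_cone. now rewrite length_pre. Qed.

Lemma extends_of_cone gamma q n : in_cone gamma q -> length gamma <= n -> extends gamma (pre q n).
Proof. unfold in_cone. intros H Hn. rewrite <- H. now apply extends_pre. Qed.

Lemma cone_eq gamma q r : in_cone gamma q -> in_cone gamma r ->
  (forall m, length gamma <= m -> pre q m = pre r m -> q m = r m) -> q = r.
Proof.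
  intros Hq Hr H. apply pre_inj. induction n as [|n IH]; [reflexivity|].
  rewrite !pre_S, IH. do 2 f_equal.
  destruct (le_lt_dec (length gamma) n) as [Hn|Hn]; [now apply H|].
  unfold in_cone in *. apply (pre_eq_lt q r (length gamma)); congruence.
Qed.

Lemma extends_branch q h n c : extends (pre q n ++ [c]) h ->
  nth_error h n = Some c /\ forall i, i < n -> nth_error h i = Some (q i).
Proof.
  intros [t ->]. rewrite <- app_assoc. split.
  - rewrite nth_error_app2, length_pre, Nat.sub_diag by (rewrite length_pre; lia).
    reflexivity.
  - intros i Hi. rewrite nth_error_app1 by (rewrite length_pre; lia).
    now apply nth_error_pre.
Qed.

Lemma pre_not_branch q m n c : c <> q n -> ~ extends (pre q n ++ [c]) (pre q m).
Proof.
  intros Hc Hext. pose proof (extends_length _ _ Hext) as L.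
  rewrite length_app, !length_pre in L. simpl in L.
  destruct (extends_branch _ _ _ _ Hext) as [Hn _].
  rewrite nth_error_pre in Hn by lia. congruence.
Qed.

Lemma branch_unique q h n c n' c' : c <> q n -> c' <> q n' ->
  extends (pre q n ++ [c]) h -> extends (pre q n' ++ [c']) h -> n = n' /\ c = c'.
Proof.
  intros Hc Hc' Hh Hh'.
  destruct (extends_branch _ _ _ _ Hh) as [Hn Hbelow].
  destruct (extends_branch _ _ _ _ Hh') as [Hn' Hbelow'].
  destruct (lt_eq_lt_dec n n') as [[Hlt| ->]|Hlt].
  - rewrite Hbelow' in Hn by exact Hlt. congruence.
  - split; congruence.
  - rewrite Hbelow in Hn' by exact Hlt. congruence.
Qed.

Definition branch_point q h : nat * C :=
  epsilon (inhabits (0, q 0))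
    (fun nc => snd nc <> q (fst nc) /\ extends (pre q (fst nc) ++ [snd nc]) h).

Lemma branch_point_spec q h n c : c <> q n -> extends (pre q n ++ [c]) h ->
  branch_point q h = (n, c).
Proof.
  intros Hc Hh. unfold branch_point.
  destruct (epsilon_spec (inhabits (0, q 0))
    (fun nc => snd nc <> q (fst nc) /\ extends (pre q (fst nc) ++ [snd nc]) h)
    (ex_intro _ (n, c) (conj Hc Hh))) as [Hc' Hh'].
  destruct (epsilon _ _) as [n' c']. simpl in *.
  destruct (branch_unique q h n' c' n c Hc' Hc Hh' Hh). now subst.
Qed.

Lemma combine_l P (s1 : forall h, P h -> C) s2 h (Hh : P h) :
  Defs.combine P s1 s2 h = s1 h Hh.
Proof.
  unfold Defs.combine. destruct excluded_middle_informative as [H|H];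
    [f_equal; apply proof_irrelevance|contradiction].
Qed.

Lemma combine_r P s1 (s2 : forall h, ~ P h -> C) h (Hh : ~ P h) :
  Defs.combine P s1 s2 h = s2 h Hh.
Proof.
  unfold Defs.combine. destruct excluded_middle_informative as [H|H];
    [contradiction|f_equal; apply proof_irrelevance].
Qed.

End Plays.

Section Strategies.
Context {A C O : Type}.
Variables (d : list C -> A) (v : (nat -> C) -> O)
  (pref : A -> O -> O -> Prop).
Notation g := (g_ d v pref).
Notation G := (G_ d v pref).

Definition same_G a (gamma gamma' : list C) : Prop :=
  forall o, G a gamma o <-> G a gamma' o.

Definition punishes a (gamma : list C) o (f : list C -> C) : Prop :=
  forall sigma, (forall h, extends gamma h -> d h <> a -> sigma h = f h) ->
    in_cone gamma (play sigma) -> ~ pref a o (v (play sigma)).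

Lemma P_restr_iff a (s : strategy d a) gamma r :
  P_restr d a s gamma r <->
  forall m (e : d (pre r m) = a), extends gamma (pre r m) -> s (pre r m) e = r m.
Proof.
  split.
  - intros [sigma [Hs ->]] m e Hm. rewrite play_S. symmetry. now apply Hs.
  - intros H. set (Q h := d h = a /\ extends gamma h).
    exists (Defs.combine Q (fun h Hh => let (e, _) := Hh in s h e) (fun h _ => r (length h))).
    split.
    + intros h e Hh. now rewrite (combine_l Q _ _ _ (conj e Hh)).
    + symmetry. apply play_eq_of_agree. intros m.
      destruct (classic (Q (pre r m))) as [[e Hm]|Hm].
      * rewrite (combine_l Q _ _ _ (conj e Hm)). now apply H.
      * rewrite (combine_r Q _ _ _ Hm). now rewrite length_pre.
Qed.

Lemma g_prefix a (s : strategy d a) q k n o : k <= n ->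
  (forall j (e : d (pre q j) = a), k <= j -> j < n -> s (pre q j) e = q j) ->
  g a (pre q n) s o -> g a (pre q k) s o.
Proof.
  intros Hkn Hs [r [Hr [Hcone Ho]]]. apply in_cone_pre in Hcone.
  rewrite P_restr_iff in Hr.
  exists r. split; [|split; [|exact Ho]].
  - apply P_restr_iff. intros m e Hm.
    destruct (le_lt_dec n m) as [Hnm|Hmn].
    + apply Hr. rewrite <- Hcone. now apply extends_pre.
    + assert (Hrm : pre r m = pre q m)
        by (rewrite <- (firstn_pre r m n), Hcone by lia; apply firstn_pre; lia).
      assert (Hkm := extends_length _ _ Hm). rewrite !length_pre in Hkm.
      revert e Hm. rewrite Hrm. intros e _.
      rewrite (pre_eq_lt r q n m Hcone Hmn). now apply Hs.
  - apply in_cone_pre. rewrite <- (firstn_pre r k n), Hcone by exact Hkn.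
    now apply firstn_pre.
Qed.

Lemma g_own_play a (s : strategy d a) q k : (forall o, ~ pref a o o) ->
  (forall m (e : d (pre q m) = a), k <= m -> s (pre q m) e = q m) ->
  g a (pre q k) s (v q).
Proof.
  intros Hirr Hs. exists q. split; [|split; [now apply in_cone_pre|apply Hirr]].
  apply P_restr_iff. intros m e Hm. apply Hs.
  apply extends_length in Hm. now rewrite !length_pre in Hm.
Qed.

Lemma G_snoc_owner a gamma c o : d gamma = a -> G a gamma o -> G a (gamma ++ [c]) o.
Proof.
  intros Hown HG s.
  pose (s' h (e : d h = a) := if excluded_middle_informative (h = gamma) then c else s h e).
  destruct (HG s') as [r [Hr [Hcone Ho]]].
  rewrite P_restr_iff in Hr. unfold in_cone in Hcone.
  assert (Hrc : r (length gamma) = c).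
  { assert (e : d (pre r (length gamma)) = a) by now rewrite Hcone.
    rewrite <- (Hr _ e) by (rewrite Hcone; exists []; now rewrite app_nil_r).
    unfold s'. now destruct excluded_middle_informative. }
  exists r. split; [|split; [|exact Ho]].
  - apply P_restr_iff. intros m e Hm. rewrite <- (Hr m e).
    + unfold s'. destruct excluded_middle_informative as [E|_]; [|reflexivity].
      apply extends_length in Hm. rewrite E, length_app in Hm. simpl in Hm. lia.
    + destruct Hm as [t Ht]. exists (c :: t). now rewrite Ht, <- app_assoc.
  - unfold in_cone. rewrite length_app, Nat.add_1_r, pre_S, Hcone, Hrc. reflexivity.
Qed.

End Strategies.

Section Punishment.
Context {A C O : Type}.
Variables (d : list C -> A) (v : (nat -> C) -> O)
  (pref : A -> O -> O -> Prop) (Gamma : ((nat -> C) -> Prop) -> Prop).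
Hypothesis HC : inhabited C.
Hypothesis pref_neg_trans : forall a x y z, ~ pref a x y -> ~ pref a y z -> ~ pref a x z.
Hypothesis Gamma_determined : forall W, Gamma W -> forall D : list C -> Prop, determined D W.
Hypothesis Gamma_cones : forall a (I : O -> Prop) (gamma : list C), terminal_interval pref a I ->
  Gamma (fun p => I (v p) /\ in_cone gamma p).

(* In the win-lose game the first player is [a] inside the cone of [gamma] and
   everybody outside it; [a] cannot win since [o] is in [G_a(gamma)], so the
   others' winning strategy is the punishment. *)
Lemma exists_punishment a gamma o : G_ d v pref a gamma o ->
  exists f, punishes d v pref a gamma o f.
Proof.
  intros HG. destruct HC as [c0].
  set (D h := d h = a \/ ~ extends gamma h).
  assert (HW : Gamma (fun q => pref a o (v q) /\ in_cone gamma q)).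
  { apply (Gamma_cones a (pref a o)). intros x y Hx Hyx. apply NNPP. intros Hoy.
    exact (pref_neg_trans _ _ _ _ Hoy Hyx Hx). }
  destruct (Gamma_determined _ HW D) as [[s1 Hs1]|[s2 Hs2]].
  - exfalso.
    destruct (HG (fun h e => s1 h (or_introl e))) as [r [Hr [Hcone Ho]]].
    rewrite P_restr_iff in Hr.
    destruct (Hs1 (fun h _ => r (length h))) as [Hwin Hcone'].
    apply Ho. replace r with (play (Defs.combine D s1 (fun h _ => r (length h)))); [exact Hwin|].
    apply (cone_eq gamma); auto. intros m Hm Hpre.
    rewrite play_S, Hpre.
    assert (Hext : extends gamma (pre r m)) by now apply extends_of_cone.
    destruct (classic (D (pre r m))) as [HD|HD].
    + rewrite (combine_l D _ _ _ HD).
      destruct HD as [e|Hne]; [now apply Hr|contradiction].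
    + rewrite (combine_r D _ _ _ HD). now rewrite length_pre.
  - exists (Defs.combine D (fun _ _ => c0) s2). intros sigma Hsigma Hcone Ho.
    assert (E : Defs.combine D (fun h _ => sigma h) s2 = sigma).
    { extensionality h. destruct (classic (D h)) as [HD|HD].
      - now rewrite (combine_l D _ _ _ HD).
      - assert (Hext : extends gamma h) by (apply NNPP; intro; apply HD; now right).
        assert (Hd : d h <> a) by (intro; apply HD; now left).
        rewrite Hsigma by assumption. now rewrite !(combine_r D _ _ _ HD). }
    apply (Hs2 (fun h _ => sigma h)). now rewrite E.
Qed.

End Punishment.

Section Equilibrium.
Context {A C O : Type}.
Variables (d : list C -> A) (v : (nat -> C) -> O) (pref : A -> O -> O -> Prop).
Hypothesis pref_irrefl : forall a o, ~ pref a o o.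

(* The profile follows [p] until its first deviation [c] at [n], and from then
   on plays the punishment of the deviator [d (pre p n)]. *)
Lemma nash_of_punishments (p : nat -> C) :
  (forall n c, c <> p n -> exists f, punishes d v pref (d (pre p n)) (pre p n ++ [c]) (v p) f) ->
  exists sigma, nash d v pref sigma.
Proof.
  intros Hpun.
  pose (threat n c := epsilon (inhabits (fun _ : list C => p 0))
                        (punishes d v pref (d (pre p n)) (pre p n ++ [c]) (v p))).
  assert (Hthreat : forall n c, c <> p n ->
            punishes d v pref (d (pre p n)) (pre p n ++ [c]) (v p) (threat n c))
    by (intros n c Hc; exact (epsilon_spec _ _ (Hpun n c Hc))).
  pose (sigma h := let (n, c) := branch_point p h in
                   if excluded_middle_informative (c <> p n /\ extends (pre p n ++ [c]) h)
                   then threat n c h else p (length h)).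
  assert (Hon : forall m, sigma (pre p m) = p m).
  { intros m. unfold sigma. destruct (branch_point p (pre p m)) as [n c].
    destruct excluded_middle_informative as [[Hc Hext]|_].
    - exfalso. exact (pre_not_branch p m n c Hc Hext).
    - now rewrite length_pre. }
  assert (Hoff : forall n c h, c <> p n -> extends (pre p n ++ [c]) h -> sigma h = threat n c h).
  { intros n c h Hc Hext. unfold sigma. rewrite (branch_point_spec p h n c Hc Hext).
    cbv iota. destruct excluded_middle_informative; tauto. }
  clearbody sigma threat.
  exists sigma. intros [a [s Hdev]].
  rewrite (play_eq_of_agree sigma p Hon) in Hdev.
  set (q := play (deviate d sigma a s)) in Hdev.
  assert (Hq : q <> p) by (intros E; rewrite E in Hdev; exact (pref_irrefl _ _ Hdev)).
  destruct (least_spec (fun m => q m <> p m)) as [Hn Hmin].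
  { apply NNPP. intros Hall. apply Hq. extensionality m.
    apply NNPP. intros Hm. apply Hall. now exists m. }
  set (n := least _) in *.
  assert (Hpre : pre q n = pre p n).
  { apply pre_ext_lt. intros m Hm. apply NNPP. intros Hqm. specialize (Hmin m Hqm). lia. }
  assert (Hqn : q n = deviate d sigma a s (pre p n))
    by (unfold q at 1; rewrite play_S; fold q; now rewrite Hpre).
  assert (Hown : d (pre p n) = a).
  { apply NNPP. intros Hne. apply Hn. rewrite Hqn. unfold deviate.
    rewrite (combine_r (fun h => d h = a) _ _ _ Hne). apply Hon. }
  refine (Hthreat n (q n) Hn (deviate d sigma a s) _ _ _).
  - intros h Hext Hd. rewrite Hown in Hd. unfold deviate.
    rewrite (combine_r (fun h => d h = a) _ _ _ Hd). now apply Hoff.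
  - unfold in_cone. fold q. rewrite length_app, length_pre, Nat.add_1_r, pre_S, Hpre.
    reflexivity.
  - now rewrite Hown.
Qed.

End Equilibrium.

Section GreedyPlay.
Context {A C O : Type}.
Variables (d : list C -> A) (v : (nat -> C) -> O) (pref : A -> O -> O -> Prop).
Notation g := (g_ d v pref).
Notation G := (G_ d v pref).
Hypothesis pref_irrefl : forall a o, ~ pref a o o.
Hypothesis G_limit : forall a (p : nat -> C) (phi : nat -> nat),
  (forall n, phi n < phi (S n)) ->
  (forall n, d (pre p (phi n)) = a /\
     (forall o, G a (pre p (phi (S n))) o -> G a (pre p (phi n)) o) /\
     (exists o, G a (pre p (phi n)) o /\ ~ G a (pre p (phi (S n))) o)) ->
  forall n, G a (pre p (phi n)) (v p).
Hypothesis optimal_exists : forall a (gamma : list C), exists s : strategy d a,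
  forall o, g a gamma s o <-> G a gamma o.

Definition optimal a gamma : strategy d a :=
  proj1_sig (constructive_indefinite_description _ (optimal_exists a gamma)).

Lemma optimal_spec a gamma o : g a gamma (optimal a gamma) o <-> G a gamma o.
Proof. unfold optimal. destruct constructive_indefinite_description as [s Hs]. apply Hs. Qed.

Definition anchor_cand (h : list C) (k : nat) : Prop :=
  k <= length h /\ d (firstn k h) = d h /\ same_G d v pref (d h) (firstn k h) h.

Definition anchor (h : list C) : nat := least (anchor_cand h).

Definition greedy_profile (h : list C) : C :=
  optimal (d h) (firstn (anchor h) h) h eq_refl.

Definition greedy_play : nat -> C := play greedy_profile.

Lemma anchor_spec h : anchor_cand h (anchor h) /\ forall k, anchor_cand h k -> anchor h <= k.
Proof.
  apply least_spec. exists (length h). unfold anchor_cand.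
  rewrite firstn_all. repeat split; auto.
Qed.

Local Notation p := greedy_play.
Local Notation M j := (anchor (pre greedy_play j)).

Lemma anchor_pre j :
  M j <= j /\ d (pre p (M j)) = d (pre p j) /\ same_G d v pref (d (pre p j)) (pre p (M j)) (pre p j).
Proof.
  destruct (anchor_spec (pre p j)) as [[Hle [Hd HG]] _]. rewrite length_pre in Hle.
  rewrite firstn_pre in Hd, HG by exact Hle. auto.
Qed.

Lemma anchor_pre_le j k : k <= j -> d (pre p k) = d (pre p j) ->
  same_G d v pref (d (pre p j)) (pre p k) (pre p j) -> M j <= k.
Proof.
  intros Hk Hd HG. apply (anchor_spec (pre p j)). unfold anchor_cand.
  rewrite length_pre, firstn_pre by exact Hk. auto.
Qed.

Lemma greedy_play_at a j (e : d (pre p j) = a) : p j = optimal a (pre p (M j)) (pre p j) e.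
Proof.
  unfold greedy_play at 1. rewrite play_S. fold greedy_play. unfold greedy_profile.
  rewrite firstn_pre by apply anchor_pre. now destruct e.
Qed.

Lemma anchor_pre_eq a i j : d (pre p i) = a -> d (pre p j) = a -> M i <= j ->
  same_G d v pref a (pre p i) (pre p j) -> M j = M i.
Proof.
  intros Hi Hj Hij HG.
  destruct (anchor_pre i) as [Mi1 [Mi2 Mi3]]. destruct (anchor_pre j) as [Mj1 [Mj2 Mj3]].
  rewrite Hi in Mi2, Mi3. rewrite Hj in Mj2, Mj3.
  assert (Hle : M j <= M i).
  { apply anchor_pre_le; [exact Hij|congruence|]. rewrite Hj. intros o. rewrite (Mi3 o). apply HG. }
  apply Nat.le_antisymm; [exact Hle|].
  apply anchor_pre_le; [lia|congruence|]. rewrite Hi. intros o. rewrite (Mj3 o). symmetry. apply HG.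
Qed.

Lemma greedy_play_follows a n m (e : d (pre p m) = a) : d (pre p n) = a -> M n <= m ->
  same_G d v pref a (pre p n) (pre p m) -> p m = optimal a (pre p (M n)) (pre p m) e.
Proof. intros Hn Hnm HG. now rewrite (greedy_play_at a m e), (anchor_pre_eq a n m). Qed.

(* Between the last own position [n] before [j] and its anchor, the play follows
   [optimal a (pre p (M n))], whose guarantee at [pre p (M n)] is [G] at [n]. *)
Lemma G_greedy_antitone a i j : i <= j -> d (pre p i) = a -> d (pre p j) = a ->
  forall o, G a (pre p j) o -> G a (pre p i) o.
Proof.
  revert i. induction j as [j IH] using lt_wf_ind. intros i Hij Hi Hj o Ho.
  destruct (Nat.eq_dec i j) as [->|Hne]; [exact Ho|].
  destruct (last_below (fun k => d (pre p k) = a) i j) as [n [Hn [Pn Hlast]]];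
    [lia|exact Hi|].
  destruct (anchor_pre n) as [Mn1 [Mn2 Mn3]]. rewrite Pn in Mn2, Mn3.
  apply (IH n ltac:(lia) i); [lia|exact Hi|exact Pn|].
  apply Mn3, optimal_spec.
  apply (g_prefix d v pref a _ p (M n) j); [lia| |now apply optimal_spec].
  intros m e Hm1 Hm2.
  assert (Hmn : m <= n)
    by (destruct (le_lt_dec m n); [assumption|exfalso; exact (Hlast m ltac:(lia) e)]).
  symmetry. apply greedy_play_follows; auto. intros o'. split; intros HG.
  - apply (IH n ltac:(lia) m); auto.
  - apply Mn3. apply (IH m ltac:(lia) (M n)); auto.
Qed.

Lemma G_greedy_play a n : d (pre p n) = a -> G a (pre p n) (v p).
Proof.
  intros Hn.
  destruct (classic (exists N, n <= N /\ d (pre p N) = a /\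
    forall m, N <= m -> d (pre p m) = a -> same_G d v pref a (pre p m) (pre p N)))
    as [[N [HnN [HN Hstable]]]|Hunstable].
  - (* from [M N] on, [p] is a play of [optimal a (pre p (M N))] *)
    apply (G_greedy_antitone a n N HnN Hn HN).
    destruct (anchor_pre N) as [MN1 [MN2 MN3]]. rewrite HN in MN2, MN3.
    apply MN3, optimal_spec, g_own_play; [apply pref_irrefl|].
    intros m e Hm. symmetry. apply greedy_play_follows; auto.
    destruct (le_lt_dec N m) as [HNm|HmN].
    + intros o. symmetry. now apply Hstable.
    + intros o. split; intros HG.
      * apply (G_greedy_antitone a m N); auto; lia.
      * apply MN3. now apply (G_greedy_antitone a (M N) m).
  - set (Pos k := n <= k /\ d (pre p k) = a).
    destruct (chain_choice Pos
      (fun k k' => k < k' /\ exists o, G a (pre p k) o /\ ~ G a (pre p k') o) n)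
      as [phi [H0 Hphi]]; [split; auto| |].
    + intros k [Hnk Hk].
      assert (Hm : exists m, k <= m /\ d (pre p m) = a /\ ~ same_G d v pref a (pre p m) (pre p k)).
      { apply NNPP. intros Hno. apply Hunstable. exists k. split; [exact Hnk|]. split; [exact Hk|].
        intros m Hkm Hm. apply NNPP. intros Hs. apply Hno. now exists m. }
      destruct Hm as [m [Hkm [Hm Hs]]].
      assert (Ho : exists o, G a (pre p k) o /\ ~ G a (pre p m) o).
      { apply NNPP. intros Hno. apply Hs. intros o.
        split; [now apply (G_greedy_antitone a k m)|].
        intros HG. apply NNPP. intros HGm. apply Hno. now exists o. }
      exists m. split; [split; [lia|exact Hm]|]. split; [|exact Ho].
      destruct (Nat.eq_dec k m) as [<-|]; [|lia].
      destruct Ho as [o [? ?]]; contradiction.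
    + rewrite <- H0. apply (G_limit a p phi); [intros k; apply Hphi|].
      intros k. destruct (Hphi k) as [[_ Hk] [Hlt Ho]].
      destruct (Hphi (S k)) as [[_ Hk'] _].
      repeat split; auto. intros o. apply (G_greedy_antitone a); auto; lia.
Qed.

End GreedyPlay.

Theorem theorem27 (A C O : Type) (HA : inhabited A) (HC : inhabited C)
  (HO : inhabited O) (d : list C -> A) (v : (nat -> C) -> O)
  (pref : A -> O -> O -> Prop) (Gamma : ((nat -> C) -> Prop) -> Prop)
  (H1 : forall a, strict_weak_order (pref a))
  (H2 : forall W, Gamma W -> forall D : list C -> Prop, determined D W)
  (H3 : forall a (I : O -> Prop) (gamma : list C), terminal_interval pref a I ->
          Gamma (fun p => I (v p) /\ in_cone gamma p))
  (H4 : forall a (p : nat -> C) (phi : nat -> nat),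
          (forall n, phi n < phi (S n)) ->
          (forall n, d (pre p (phi n)) = a /\
             (forall o, G_ d v pref a (pre p (phi (S n))) o ->
                        G_ d v pref a (pre p (phi n)) o) /\
             (exists o, G_ d v pref a (pre p (phi n)) o /\
                        ~ G_ d v pref a (pre p (phi (S n))) o)) ->
          forall n, G_ d v pref a (pre p (phi n)) (v p))
  (H5 : forall a (gamma : list C), exists s : strategy d a,
          forall o, g_ d v pref a gamma s o <-> G_ d v pref a gamma o) :
  exists sigma : list C -> C, nash d v pref sigma.
Proof.
  assert (pref_irrefl : forall a o, ~ pref a o o) by (intros a; apply (H1 a)).
  assert (pref_neg_trans : forall a x y z, ~ pref a x y -> ~ pref a y z -> ~ pref a x z)
    by (intros a; apply (H1 a)).
  apply (nash_of_punishments d v pref pref_irrefl (greedy_play d v pref H5)).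
  intros n c _.
  apply (exists_punishment d v pref Gamma HC pref_neg_trans H2 H3).
  apply G_snoc_owner; [reflexivity|].
  now apply (G_greedy_play d v pref pref_irrefl H4 H5).
Qed.
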